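(* Let $A_\alpha$ be the adjacency operator with a periodic magnetic potential $\alpha$ on a periodic graph $\mathcal G$. Then its total bandwidth satisfies, for every $n\in\mathbb N$, $$\mathfrak S(A_\alpha)\ge\frac{\max\{\widetilde B_{\alpha,n}^+,2\widetilde B_{\alpha,n}^{odd}\}}{n\varkappa_+^{\,n-1}},\qquad \widetilde B_{\alpha,n}^+=\Big|\sum_{\mathbf c\in\mathcal C_n^+}\cos\alpha(\mathbf c)\Big|,\quad \widetilde B_{\alpha,n}^{odd}=\Big|\sum_{\mathbf c\in\mathcal C_n^{odd}}\cos\alpha(\mathbf c)\Big|.$$
   Context: Let $\Gamma\subset\mathbb R^d$ be a lattice with basis $\mathfrak a_1,\dots,\mathfrak a_d$ and fundamental cell $\Omega=\{\sum_sx_s\mathfrak a_s:(x_s)\in[0,1)^d\}$. Let $\mathcal G=(\mathcal V,\mathcal E)$ be a connected, locally finite, infinite graph embedded in $\mathbb R^d$ (loops, multiple edges allowed), invariant under $\Gamma$-translations, with finite quotient $\mathcal G_*=(\mathcal V_*,\mathcal E_* )$; $\nu=\#\mathcal V_*$. Oriented edges $\mathcal A,\mathcal A_*$; $\underline{\mathbf e}$ inverse; $\varkappa_x$ = number of oriented edges starting at $x$ (loops counted twice); $\varkappa_+=\max_{\mathcal V_*}\varkappa_x$. Edge index: $x=x_0+[x]$, $x_0\in\mathcal V\cap\Omega$, $[x]\in\Gamma$ with coordinates $[x]_{\mathbb A}\in\mathbb Z^d$; $\tau((x,y))=[y]_{\mathbb A}-[x]_{\mathbb A}$, defined on $\mathcal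 A_*$. Periodic magnetic potential $\alpha:\mathcal A\to\mathbb R$ with $\alpha(\underline{\mathbf e})=-\alpha(\mathbf e)$, $\Gamma$-invariant. $(A_\alpha f)_x=\sum_{\mathbf e=(x,y)\in\mathcal A}e^{i\alpha(\mathbf e)}f_y$ on $\ell^2(\mathcal V)$; fiber operators $(A_\alpha(k)f)_x=\sum_{\mathbf e=(x,y)\in\mathcal A_*}e^{i(\alpha(\mathbf e)+\langle\tau(\mathbf e),k\rangle)}f_y$ on $\mathbb C^\nu$, $k\in\mathbb T^d=\mathbb R^d/(2\pi\mathbb Z)^d$, with eigenvalues $\lambda^o_{\alpha,1}(k)\le\dots\le\lambda^o_{\alpha,\nu}(k)$; bands $\sigma_j(A_\alpha)=\lambda^o_{\alpha,j}(\mathbb T^d)$; $\mathfrak S(A_\alpha)=\sum_j|\sigma_j(A_\alpha)|$. Cycles of $\mathcal G_*$: ordered sequences of oriented edges $(\mathbf e_1,\dots,\mathbf e_n)$, $\mathbf e_s=(x_{s-1},x_s)$, $x_n=x_0$ (cyclic shifts distinct, backtracking allowed); index $\tau(\mathbf c)=\sum\tau(\mathbf e)$; flux $\alpha(\mathbf c)=(\sum\alpha(\mathbf e))\bmod 2\pi$. $\mathcal C_n^+$: cycles of length $n$ with non-zero index; $\mathcal C_n^{odd}$: cycles of length $n$ with $\langle\tau(\mathbf c),(1,\dots,1)\rangle$ odd. *)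

From HB Require Import structures.
From mathcomp Require Import all_boot all_order all_algebra.
From mathcomp Require Import all_classical all_reals all_analysis.
From mathcomp Require Import complex.
From Stdlib Require Import Relations.Relation_Operators.

Set Implicit Arguments.
Unset Strict Implicit.
Unset Printing Implicit Defensive.

Import Order.TTheory GRing.Theory Num.Theory.
Local Open Scope ring_scope.

(* A Z^d-periodic graph G is described by its finite quotient G_* :
   vertices 'I_nu (nu = #V_* ), a finite type E of ORIENTED edges of G_* 
   (the set A_* of the paper ), source/target maps, the edge inversion e |-> \underline e
   (a fixed-point-free involution reversing orientation; a loop gives two
   distinct oriented edges, so loops are counted twice in kappa_x), and the
   edge index tau : E -> Z^d (a row vector of integers).
   G itself is the derived graph on 'I_nu * Z^d: the oriented edge e of G_*
   lifts to the edges (src e, m) -> (tgt e, m + tau e), m in Z^d.         *)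

Section PeriodicGraph.

Variables (E : finType) (nu d : nat).
Variables (src tgt : E -> 'I_nu) (inv : E -> E) (tau : E -> 'rV[int]_d).

Definition periodic_graph_axioms : Prop :=
  [/\ forall e, inv (inv e) = e,
      forall e, inv e <> e,
      forall e, src (inv e) = tgt e,
      forall e, tgt (inv e) = src e &
      forall e, tau (inv e) = - tau e].

Definition lift_edge (p q : 'I_nu * 'rV[int]_d) : Prop :=
  exists e, [/\ src e = p.1, tgt e = q.1 & q.2 = p.2 + tau e].

Definition lift_connected : Prop :=
  forall p q, clos_refl_trans _ lift_edge p q.

Definition kappa (x : 'I_nu) : nat := #|[set e | src e == x]|.
Definition kappa_plus : nat := \max_(x < nu) kappa x.

Definition is_cycle n (c : {ffun 'I_n -> E}) : bool :=
  [forall i, tgt (c i) == src (c (ordS i))].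

Definition cycle_index n (c : {ffun 'I_n -> E}) : 'rV[int]_d :=
  \sum_(i < n) tau (c i).

Definition cycle_odd n (c : {ffun 'I_n -> E}) : bool :=
  odd (absz (\sum_(j < d) cycle_index c 0 j)).

Variable R : realType.
Variable alpha : E -> R.

Definition magnetic_axiom : Prop := forall e, alpha (inv e) = - alpha e.

(* flux (a representative; only cos of it is used) *)
Definition cycle_flux n (c : {ffun 'I_n -> E}) : R := \sum_(i < n) alpha (c i).

Definition B_plus n : R :=
  `| \sum_(c : {ffun 'I_n -> E} | is_cycle c && (cycle_index c != 0))
        cos (cycle_flux c) |.

Definition B_odd n : R :=
  `| \sum_(c : {ffun 'I_n -> E} | is_cycle c && cycle_odd c)
        cos (cycle_flux c) |.

Definition expi (t : R) : R[i] := (cos t +i* sin t)%C.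

(* fiber operator A_alpha(k), k in R^d (k and k + 2 pi Z^d give the same
   operator, so ranging over R^d is ranging over the torus T^d) *)
Definition fiber_op (k : 'rV[R]_d) : 'M[R[i]]_nu :=
  \matrix_(x, y) \sum_(e | (src e == x) && (tgt e == y))
      expi (alpha e + \sum_(j < d) (tau e 0 j)%:~R * k 0 j).

End PeriodicGraph.

(* Eigenvalues of a square complex matrix counted with multiplicity:
   the roots of its characteristic polynomial.                         *)

Lemma char_poly_split (F : closedFieldType) n (A : 'M[F]_n) :
  exists s : seq F, char_poly A == \prod_(z <- s) ('X - z%:P).
Proof.
have [s Hs] := closed_field_poly_normal (char_poly A).
by exists s; apply/eqP; rewrite [LHS]Hs (monicP (char_poly_monic A)) scale1r.
Qed.

Definition eig_roots (R : realType) n (A : 'M[R[i]]_n) : seq R[i] :=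
  xchoose (char_poly_split A).

(* the eigenvalues (real parts; they are real for hermitian A) in
   increasing order, with multiplicity *)
Definition eigvals (R : realType) n (A : 'M[R[i]]_n) : seq R :=
  sort <=%R (map (@complex.Re R) (eig_roots A)).

(* lambda_{j+1}(A), j = 0 .. n-1 : the (j+1)-th smallest eigenvalue *)
Definition eigval (R : realType) n (A : 'M[R[i]]_n) (j : nat) : R :=
  nth 0 (eigvals A) j.

Section Bands.
Variables (E : finType) (nu d : nat).
Variables (src tgt : E -> 'I_nu) (tau : E -> 'rV[int]_d).
Variables (R : realType) (alpha : E -> R).

Definition band (j : nat) : set R :=
  range (fun k : 'rV[R]_d => eigval (fiber_op src tgt tau alpha k) j).

Definition band_length (j : nat) : R := sup (band j) - inf (band j).

Definition total_bandwidth : R := \sum_(j < nu) band_length j.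

End Bands.

From HB Require Import structures.
From mathcomp Require Import all_boot all_order all_algebra.
From mathcomp Require Import all_classical all_reals all_analysis.
From mathcomp Require Import complex.
From mathcomp Require Import ring lra zify.
Set Implicit Arguments.
Unset Strict Implicit.
Unset Printing Implicit Defensive.

Import Order.TTheory GRing.Theory Num.Theory.
Import Normc.
Local Open Scope ring_scope.

(* Write T_n(k) for the real part of tr A(k)^n.  Expanding the n-th power of
   A(k) = sum_e e^{i(alpha(e) + <tau(e),k>)} E_{src e, tgt e} along products of
   matrix units, T_n(k) is the sum over cycles c of length n of
   cos (alpha(c) + <tau(c),k>).  Diagonalising the hermitian matrix A(k), it is
   also sum_j lambda_j(k)^n, where every |lambda_j(k)| <= kappa_+ by a
   column-sum bound.  Hence |lambda^n - mu^n| <= n kappa_+^(n-1) |lambda - mu|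
   and, since lambda_j(k) and lambda_j(k') both lie in the band sigma_j,
   |T_n(k) - T_n(k')| <= n kappa_+^(n-1) S(A_alpha).  For k' = (pi,...,pi) each
   cycle picks up the sign (-1)^<tau(c),(1,...,1)>, so T_n(0) - T_n(k') is twice
   the sum over odd cycles.  Averaging over the grid k in (2pi/N){0..N-1}^d,
   with N larger than every |tau(c)_j|, replaces cos (a + <m,k>) by
   [m = 0] cos a, so the average of T_n(0) - T_n(k) is the sum over the cycles
   of non-zero index. *)

Section Expi.
Variable R : realType.
Implicit Types a x : R.

Lemma expiD a b : expi (a + b) = expi a * expi b.
Proof. by rewrite /expi cosD sinD; congr (_ +i* _)%C; lra. Qed.

Lemma expi0 : expi (0 : R) = 1.
Proof. by rewrite /expi cos0 sin0. Qed.

Lemma prod_expi (I : Type) (r : seq I) (P : pred I) (f : I -> R) :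
  \prod_(i <- r | P i) expi (f i) = expi (\sum_(i <- r | P i) f i).
Proof. by rewrite (big_morph (@expi R) expiD expi0). Qed.

Lemma expiMn a n : expi (a *+ n) = expi a ^+ n.
Proof. by rewrite -(card_ord n) -prodr_const prod_expi sumr_const card_ord. Qed.

Lemma conj_expi a : Num.conj (expi a) = expi (- a).
Proof. by rewrite /expi cosN sinN. Qed.

Lemma Re_expi a : complex.Re (expi a) = cos a.
Proof. by []. Qed.

Lemma normc_expi a : normc (expi a) = 1.
Proof. by rewrite /expi /= cos2Dsin2 sqrtr1. Qed.

Lemma expi_int2pi (z : int) : expi (z%:~R * pi *+ 2 : R) = 1.
Proof.
have expi_nat2pi (n : nat) : expi (pi *+ 2 *+ n : R) = 1.
  by rewrite -[_ *+ n]add0r /expi (periodicn (@cosD2pi R)) (periodicn (@sinD2pi R)) cos0 sin0.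
case: z => n; first by rewrite -pmulrn mulr_natl -mulrnA mulnC mulrnA expi_nat2pi.
rewrite NegzE mulrNz -pmulrn mulNr mulNrn -conj_expi mulr_natl -mulrnA mulnC.
by rewrite mulrnA expi_nat2pi rmorph1.
Qed.

Lemma cosDpi_int a (z : int) : cos (a + z%:~R * pi) = (-1) ^+ `|z|%N * cos a.
Proof.
have cosDpi_nat (b : R) (n : nat) : cos (b + n%:R * pi) = (-1) ^+ n * cos b.
  by rewrite mulr_natl (alternatingn (@cosDpi R)).
case: z => n; first exact: cosDpi_nat.
by rewrite NegzE mulrNz mulNr -cosN opprB addrC cosDpi_nat cosN.
Qed.

Lemma cos_mulr2n_neq1 x : 0 < x < pi -> cos (x *+ 2) != 1.
Proof.
move=> /sin_gt0_pi sx_gt0; rewrite cos_mulr2n; apply/eqP => cos2x.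
have : sin x ^+ 2 = 0 by have := cos2Dsin2 x; lra.
by move/eqP; rewrite sqrf_eq0 gt_eqF.
Qed.

Lemma expi_grid_neq1 (N : nat) (z : int) : z != 0 -> (`|z| < N)%N ->
  expi (z%:~R * (pi *+ 2 / N%:R) : R) != 1.
Proof.
move=> z_neq0 z_lt_N; pose x : R := `|z|%N%:R * pi / N%:R.
have x_gt0 : 0 < x by apply: divr_gt0; rewrite ?mulr_gt0 ?pi_gt0 ?ltr0n ?absz_gt0 //; lia.
have x_ltpi : x < pi by rewrite ltr_pdivrMr ?ltr0n 1?mulrC ?ltr_pM2l ?pi_gt0 ?ltr_nat //; lia.
have /cos_mulr2n_neq1 : 0 < x < pi by rewrite x_gt0 x_ltpi.
apply: contraNneq => /(congr1 (@complex.Re R)); rewrite /= -cos_norm => <-.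
apply/eqP; congr cos.
rewrite normrM -intr_norm -natr_absz ger0_norm; first by rewrite /x; ring.
by apply: divr_ge0; [apply: mulrn_wge0; exact: pi_ge0 | exact: ler0n].
Qed.

Lemma sum_expi_grid (N : nat) (z : int) : (`|z| < N)%N ->
  \sum_(s < N) expi (z%:~R * (pi *+ 2 * s%:R / N%:R) : R) = (z == 0)%:R * N%:R.
Proof.
move=> z_lt_N; have [->|z_neq0] := eqVneq z 0.
  by under eq_bigr do rewrite mul0r expi0; rewrite sumr_const card_ord mul1r.
have N_neq0 : (N%:R : R) != 0 by rewrite pnatr_eq0; lia.
pose w := expi (z%:~R * (pi *+ 2 / N%:R) : R).
have wX (s : 'I_N) : expi (z%:~R * (pi *+ 2 * s%:R / N%:R) : R) = w ^+ s.
  by rewrite /w -expiMn -mulr_natr; congr expi; ring.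
have wN : w ^+ N = 1 by rewrite /w -expiMn -[RHS](expi_int2pi z); congr expi; field.
under eq_bigr do rewrite wX.
have := subrX1 w N; rewrite wN subrr => /esym/eqP.
by rewrite mulf_eq0 subr_eq0 (negPf (expi_grid_neq1 z_neq0 z_lt_N)) => /eqP ->; rewrite mul0r.
Qed.

End Expi.

Lemma forall_big_andE (I : finType) (P : pred I) : [forall i, P i] = \big[andb/true]_i P i.
Proof. by rewrite big_andE. Qed.

Section DeltaProducts.
Variables (F : pzRingType) (p : nat).

Lemma prod_delta_mx n (S T : nat -> 'I_p) :
  \prod_(i < n.+1) (delta_mx (S i) (T i) : 'M[F]_p) =
  delta_mx (S 0%N) (T n) *+ \big[andb/true]_(i < n) (T i == S i.+1).
Proof.
elim: n => [|n IHn]; first by rewrite big_ord1 big_ord0.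
rewrite big_ord_recr /= IHn mulrnAl -mulmxE mul_delta_mx_cond -mulrnA.
rewrite big_ord_recr /=.
by case: (\big[andb/true]_(i < n) _); case: (T n == _).
Qed.

Lemma mxtrace_delta (i j : 'I_p) : \tr (delta_mx i j : 'M[F]_p) = (i == j)%:R.
Proof.
rewrite /mxtrace (bigD1 i) //= big1 ?addr0 => [|k /negPf k_neq_i].
  by rewrite mxE eqxx.
by rewrite mxE k_neq_i.
Qed.

Lemma mxtrace_prod_delta_mx n (S T : 'I_n.+1 -> 'I_p) :
  \tr (\prod_i (delta_mx (S i) (T i) : 'M[F]_p)) = [forall i, T i == S (ordS i)]%:R.
Proof.
rewrite (eq_bigr (fun i : 'I_n.+1 => delta_mx (S (inord i)) (T (inord i)))); last first.
  by move=> i _; rewrite inord_val.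
rewrite (prod_delta_mx n (S \o inord) (T \o inord)) raddfMn /= mxtrace_delta -mulrnA mulnb.
congr (_%:R); rewrite (@forall_big_andE 'I_n.+1) big_ord_recr /= andbC.
congr (_ && _).
  apply: eq_bigr => i _; move: (ltn_ord i) => lt_in.
  by congr (T _ == S _); apply: val_inj; rewrite /= ?inordK ?modn_small //; lia.
by rewrite eq_sym; congr (T _ == S _); apply: val_inj; rewrite /= inordK // modnn.
Qed.

End DeltaProducts.

Lemma scalemx_prod (F : comPzRingType) p (I : Type) (r : seq I) (P : pred I)
    (a : I -> F) (M : I -> 'M[F]_p) :
  \prod_(i <- r | P i) (a i *: M i) = (\prod_(i <- r | P i) a i) *: \prod_(i <- r | P i) M i.
Proof.
elim/big_rec3: _ => [|i b N _ _ ->]; first by rewrite scale1r.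
by rewrite -!mulmxE -scalemxAl -scalemxAr scalerA.
Qed.

Lemma char_poly_similar (F : fieldType) p (V B : 'M[F]_p) : V \in unitmx ->
  char_poly (invmx V *m B *m V) = char_poly B.
Proof.
move=> V_unit; rewrite /char_poly /char_poly_mx.
have HX : ('X%:M : 'M[{poly F}]_p) = map_mx polyC (invmx V) *m 'X%:M *m map_mx polyC V.
  by rewrite scalar_mxC -mulmxA -map_mxM mulVmx // map_mx1 mulmx1.
rewrite !map_mxM {1}HX -mulmxBl -mulmxBr !det_mulmx !det_map_mx.
by rewrite mulrC mulrA -rmorphM -det_mulmx mulmxV // det1 rmorph1 mul1r.
Qed.

Lemma exp_similar (F : comUnitRingType) p (V B : 'M[F]_p) n : V \in unitmx ->
  (invmx V *m B *m V) ^+ n = invmx V *m B ^+ n *m V.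
Proof.
move=> V_unit; elim: n => [|n IHn]; first by rewrite !expr0 mulmx1 mulVmx.
rewrite !exprS IHn -!mulmxE !mulmxA; congr (_ *m _).
by rewrite -!mulmxA mulKVmx.
Qed.

Lemma diag_mx_exp (F : pzRingType) p (D : 'rV[F]_p) n :
  diag_mx D ^+ n = diag_mx (\row_j D 0 j ^+ n).
Proof.
elim: n => [|n IHn]; first by apply/matrixP => i j; rewrite !mxE expr0.
rewrite exprS IHn -mulmxE mulmx_diag; congr diag_mx; apply/rowP => j.
by rewrite !mxE exprS.
Qed.

Section EigRoots.
Variables (R : realType) (nu : nat).
Implicit Type A : 'M[R[i]]_nu.

Lemma char_poly_eig_roots A : char_poly A = \prod_(r <- eig_roots A) ('X - r%:P).
Proof. exact/eqP/(xchooseP (char_poly_split A)). Qed.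

Lemma size_eig_roots A : size (eig_roots A) = nu.
Proof. by have := size_char_poly A; rewrite char_poly_eig_roots size_prod_XsubC => -[]. Qed.

Lemma eigenvalue_eig_roots A r : r \in eig_roots A -> eigenvalue A r.
Proof. by rewrite eigenvalue_root_char char_poly_eig_roots root_prod_XsubC. Qed.

Lemma size_eigvals A : size (eigvals A) = nu.
Proof. by rewrite size_sort size_map size_eig_roots. Qed.

Lemma eigval_Re_eig_root A j : (j < nu)%N ->
  exists2 r : R[i], r \in eig_roots A & eigval A j = complex.Re r.
Proof.
move=> j_lt; have /(mem_nth 0) : (j < size (eigvals A))%N by rewrite size_eigvals.
rewrite mem_sort => /mapP[r r_in r_eq].
by exists r => //; exact: r_eq.
Qed.

Variable A : 'M[R[i]]_nu.
Hypothesis A_herm : A \is hermsymmx.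

Lemma perm_eq_eig_roots_spectral :
  perm_eq (eig_roots A) [seq spectral_diag A 0 i | i : 'I_nu].
Proof.
apply: prod_XsubC_eq; rewrite big_map -char_poly_eig_roots.
have -> : char_poly A = char_poly (diag_mx (spectral_diag A)).
  rewrite {1}(orthomx_spectralP (hermitian_normalmx A_herm)).
  by rewrite char_poly_similar ?spectral_unit.
rewrite char_poly_trig ?diag_mx_is_trig //.
by rewrite big_enum; apply: eq_bigr => i _; rewrite mxE eqxx mulr1n.
Qed.

Lemma eig_roots_real r : r \in eig_roots A -> r \is Num.real.
Proof.
rewrite (perm_mem perm_eq_eig_roots_spectral) => /mapP[i _ ->].
by have /mxOverP := hermitian_spectral_diag_real A_herm; apply.
Qed.

Lemma mxtrace_exp_eig_roots n : \tr (A ^+ n) = \sum_(r <- eig_roots A) r ^+ n.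
Proof.
rewrite (perm_big _ perm_eq_eig_roots_spectral) big_map.
rewrite [in LHS](orthomx_spectralP (hermitian_normalmx A_herm)).
rewrite exp_similar ?spectral_unit // diag_mx_exp mxtrace_mulC mulmxA.
rewrite mulmxV ?spectral_unit // mul1mx mxtrace_diag.
by rewrite big_enum; apply: eq_bigr => i _; rewrite mxE.
Qed.

Lemma Re_mxtrace_exp_eigval n : complex.Re (\tr (A ^+ n)) = \sum_(j < nu) eigval A j ^+ n.
Proof.
rewrite mxtrace_exp_eig_roots raddf_sum /=.
rewrite (eq_big_seq (fun r => complex.Re r ^+ n)) => [|r /eig_roots_real r_real].
  rewrite -(big_map (@complex.Re R) xpredT (fun x => x ^+ n)).
  rewrite -(perm_big _ (permEl (perm_sort <=%R _))) (big_nth 0) size_eigvals.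
  by rewrite big_mkord.
by rewrite -[in LHS](RRe_real r_real) -rmorphXn.
Qed.

End EigRoots.

Lemma row_neq0_exists (V : nmodType) n (v : 'rV[V]_n) : v != 0 -> exists j, v 0 j != 0.
Proof.
move=> v_neq0; apply/existsP; apply: contraR v_neq0 => /existsPn v0.
by apply/eqP/rowP => j; rewrite mxE; apply/eqP/negPn/v0.
Qed.

Section Pairing.
Variables (R : pzRingType) (d : nat).
Implicit Types (m : 'rV[int]_d) (k : 'rV[R]_d).

Definition pairing m k : R := \sum_(j < d) (m 0 j)%:~R * k 0 j.

Lemma pairing_sum (I : Type) (r : seq I) (P : pred I) (m : I -> 'rV[int]_d) k :
  pairing (\sum_(i <- r | P i) m i) k = \sum_(i <- r | P i) pairing (m i) k.
Proof.
rewrite /pairing exchange_big /=; apply: eq_bigr => j _.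
by rewrite summxE rmorph_sum mulr_suml.
Qed.

Lemma pairingN m k : pairing (- m) k = - pairing m k.
Proof. by rewrite /pairing -sumrN; apply: eq_bigr => j _; rewrite mxE rmorphN mulNr. Qed.

Lemma pairingr0 m : pairing m 0 = 0.
Proof. by apply: big1 => j _; rewrite mxE mulr0. Qed.

Lemma pairing_const_mx m (x : R) : pairing m (const_mx x) = (\sum_j m 0 j)%:~R * x.
Proof. by rewrite rmorph_sum mulr_suml; apply: eq_bigr => j _; rewrite mxE. Qed.

End Pairing.

Section TorusGrid.
Variables (R : realType) (d : nat).

Definition torus_grid N (t : {ffun 'I_d -> 'I_N}) : 'rV[R]_d :=
  \row_j (pi *+ 2 * (t j)%:R / N%:R).

Lemma sum_cos_torus_grid (N : nat) (a : R) (m : 'rV[int]_d) : (forall j, (`|m 0%R j| < N)%N) ->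
  \sum_(t : {ffun 'I_d -> 'I_N}) cos (a + pairing m (torus_grid t)) =
  (m == 0)%:R * (N ^ d)%:R * cos a.
Proof.
move=> m_lt_N.
have cos_expi (t : {ffun 'I_d -> 'I_N}) : cos (a + pairing m (torus_grid t)) = complex.Re (expi a *
    \prod_j expi ((m 0 j)%:~R * (pi *+ 2 * (t j)%:R / N%:R))).
  by rewrite prod_expi -expiD Re_expi; congr (cos (_ + _)); apply: eq_bigr => j _; rewrite mxE.
under eq_bigr do rewrite cos_expi.
rewrite -raddf_sum -mulr_sumr.
rewrite -(bigA_distr_bigA (fun j (s : 'I_N) => expi ((m 0 j)%:~R * (pi *+ 2 * s%:R / N%:R) : R))).
under eq_bigr do rewrite sum_expi_grid //.
rewrite big_split prodr_const card_ord -natrX /=.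
have -> : \prod_(j < d) ((m 0 j == 0)%:R : R[i]) = (m == 0)%:R.
  have [->|m_neq0] := eqVneq m 0; first by rewrite big1 // => j _; rewrite mxE eqxx.
  have [j0 mj0] := row_neq0_exists m_neq0.
  by rewrite (bigD1 j0) //= (negPf mj0) mul0r.
case: (m == 0); rewrite ?mul0r ?mulr0 ?mul1r ?raddf0 //.
by rewrite mulr_natr raddfMn mulr_natl.
Qed.

End TorusGrid.

Section Normc.
Variable R : realType.
Implicit Types z : R[i].

Lemma normc_ge0 z : 0 <= normc z.
Proof. by case: z => a b; apply: sqrtr_ge0. Qed.

Lemma ler_normc_sum (I : Type) (r : seq I) (P : pred I) (f : I -> R[i]) :
  normc (\sum_(i <- r | P i) f i) <= \sum_(i <- r | P i) normc (f i).
Proof.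
elim/big_rec2: _ => [|i y1 y2 _ IH]; first by rewrite normc0.
by apply: le_trans (le_normcD _ _) _; rewrite lerD2l.
Qed.

Lemma norm_Re_le_normc z : `|complex.Re z| <= normc z.
Proof.
case: z => a b /=; rewrite -sqrtr_sqr ler_sqrt ?lerDl ?sqr_ge0 //.
by rewrite addr_ge0 ?sqr_ge0.
Qed.

End Normc.

Lemma ler_norm_subXn (R : numDomainType) (a b c : R) n : `|a| <= c -> `|b| <= c ->
  `|a ^+ n.+1 - b ^+ n.+1| <= n.+1%:R * c ^+ n * `|a - b|.
Proof.
move=> a_le b_le; have c_ge0 : 0 <= c by exact: le_trans a_le.
rewrite subrXX normrM mulrC ler_wpM2r //.
apply: le_trans (ler_norm_sum _ _ _) _.
apply: le_trans (_ : \sum_(i < n.+1) c ^+ n <= _); last first.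
  by rewrite sumr_const card_ord mulr_natl.
apply: ler_sum => i _; rewrite normrM !normrX.
have -> : c ^+ n = c ^+ (n.+1.-1 - i) * c ^+ i by rewrite -exprD subnK // -ltnS.
by apply: ler_pM; rewrite ?exprn_ge0 ?normr_ge0 ?lerXn2r ?nnegrE ?normr_ge0.
Qed.

Section FiberOperator.
Variables (R : realType) (E : finType) (nu d : nat).
Variables (src tgt : E -> 'I_nu) (inv : E -> E) (tau : E -> 'rV[int]_d).
Variable alpha : E -> R.
Hypothesis graphA : periodic_graph_axioms src tgt inv tau.
Hypothesis magneticA : magnetic_axiom inv alpha.

Local Notation A k := (fiber_op src tgt tau alpha k).
Local Notation kappa_max := ((kappa_plus src)%:R : R).
Local Notation band := (band src tgt tau alpha).
Local Notation S := (total_bandwidth src tgt tau alpha).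
Local Notation T k n := (complex.Re (\tr (A k ^+ n.+1))).

Lemma fiber_opE k :
  A k = \sum_e expi (alpha e + pairing (tau e) k) *: delta_mx (src e) (tgt e).
Proof.
apply/matrixP => x y; rewrite mxE summxE big_mkcond /=; apply: eq_bigr => e _.
rewrite !mxE [x == _]eq_sym [y == _]eq_sym.
by case: (_ && _); rewrite ?mulr1 ?mulr0.
Qed.

Lemma mxtrace_fiber_opX k n :
  \tr (A k ^+ n.+1) = \sum_(c : {ffun 'I_n.+1 -> E} | is_cycle src tgt c)
     expi (cycle_flux alpha c + pairing (cycle_index tau c) k).
Proof.
rewrite -[n.+1]card_ord -prodr_const fiber_opE card_ord.
rewrite (bigA_distr_bigA (fun (i : 'I_n.+1) e =>
  expi (alpha e + pairing (tau e) k) *: delta_mx (src e) (tgt e))).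
rewrite raddf_sum [RHS]big_mkcond /=; apply: eq_bigr => c _.
rewrite scalemx_prod mxtraceZ mxtrace_prod_delta_mx prod_expi big_split /=.
rewrite /cycle_index pairing_sum /is_cycle.
by case: [forall _, _]; rewrite ?mulr1 ?mulr0.
Qed.

Lemma Re_mxtrace_fiber_opX k n :
  T k n = \sum_(c : {ffun 'I_n.+1 -> E} | is_cycle src tgt c)
     cos (cycle_flux alpha c + pairing (cycle_index tau c) k).
Proof. by rewrite mxtrace_fiber_opX raddf_sum. Qed.

Lemma inv_inj : injective inv.
Proof. by case: graphA => invK _ _ _ _; exact: can_inj invK. Qed.

Lemma fiber_op_hermitian k : A k \is hermsymmx.
Proof.
case: graphA => _ _ src_inv tgt_inv tau_inv.
apply/is_hermitianmxP; rewrite expr0 scale1r; apply/matrixP => x y.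
rewrite !mxE rmorph_sum (reindex_inj inv_inj) /=.
apply: eq_big => [e|e _]; first by rewrite src_inv tgt_inv andbC.
have pairing_tau f : \sum_(j < d) (tau f 0 j)%:~R * k 0 j = pairing (tau f) k by [].
by rewrite conj_expi magneticA !pairing_tau tau_inv pairingN opprD.
Qed.

Lemma card_tgt_kappa y : #|[set e | tgt e == y]| = kappa src y.
Proof.
case: graphA => _ _ src_inv _ _.
by rewrite /kappa -[RHS](card_preimset _ inv_inj); apply: eq_card => e; rewrite !inE src_inv.
Qed.

Lemma sum_normc_fiber_op_col_le k y : \sum_x normc (A k x y) <= (kappa src y)%:R.
Proof.
apply: (@le_trans _ _ (\sum_x \sum_(e | (src e == x) && (tgt e == y)) (1 : R))).
  apply: ler_sum => x _; rewrite mxE; apply: le_trans (ler_normc_sum _ _ _) _.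
  by apply: ler_sum => e _; rewrite normc_expi.
have swap x : \sum_(e | (src e == x) && (tgt e == y)) (1 : R) =
    \sum_(e | (tgt e == y) && (src e == x)) 1 by apply: eq_bigl => e; rewrite andbC.
rewrite (eq_bigr _ (fun x _ => swap x)) -(partition_big src xpredT) //.
by rewrite sumr_const -card_tgt_kappa cardsE.
Qed.

Lemma normc_eigenvalue_fiber_op_le k r : eigenvalue (A k) r -> normc r <= kappa_max.
Proof.
case/eigenvalueP => v vA v_neq0.
have [i0 vi0_neq0] := row_neq0_exists v_neq0.
pose y := [arg max_(y > i0) normc (v 0 y)]%O.
have vy_max x : normc (v 0 x) <= normc (v 0 y) by rewrite /y; case: arg_maxP => // i _; apply.
have vy_gt0 : 0 < normc (v 0 y).
  apply: lt_le_trans (vy_max i0); rewrite lt_def normc_ge0 andbT.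
  by apply: contra vi0_neq0 => /eqP/eq0_normc ->.
have vAy : r * v 0 y = \sum_x v 0 x * A k x y.
  by have := congr1 (fun M : 'rV_nu => M 0 y) vA; rewrite !mxE => <-.
have : normc r * normc (v 0 y) <= (kappa src y)%:R * normc (v 0 y).
  rewrite -normcM vAy; apply: le_trans (ler_normc_sum _ _ _) _.
  apply: le_trans (_ : \sum_x normc (v 0 y) * normc (A k x y) <= _).
    by apply: ler_sum => x _; rewrite normcM ler_wpM2r ?normc_ge0.
  by rewrite -mulr_sumr mulrC ler_wpM2r ?normc_ge0 ?sum_normc_fiber_op_col_le.
rewrite ler_pM2r // => /le_trans; apply; rewrite ler_nat.
by rewrite /kappa_plus (bigD1 y) //= leq_maxl.
Qed.

Lemma norm_eigval_fiber_op_le k j : `|eigval (A k) j| <= kappa_max.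
Proof.
have [j_lt|j_ge] := ltnP j nu; last first.
  by rewrite /eigval nth_default ?size_eigvals ?normr0.
have [r r_in ->] := eigval_Re_eig_root (A k) j_lt.
apply: le_trans (norm_Re_le_normc r) _.
exact/normc_eigenvalue_fiber_op_le/(eigenvalue_eig_roots r_in).
Qed.
Lemma dist_eigval_fiber_op_le k k' j :
  `|eigval (A k) j - eigval (A k') j| <= band_length src tgt tau alpha j.
Proof.
have in_band k'' : band j (eigval (A k'') j) by exists k''.
have band_le k'' : `|eigval (A k'') j| <= kappa_max := norm_eigval_fiber_op_le k'' j.
have band_sup : has_sup (band j).
  split; first by exists (eigval (A k) j).
  by exists kappa_max => _ [k'' _ <-]; apply: le_trans (band_le k''); exact: ler_norm.
have band_inf : has_inf (band j).
  split; first by exists (eigval (A k) j).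
  exists (- kappa_max) => _ [k'' _ <-]; rewrite lerNl; apply: le_trans (band_le k'').
  by rewrite -normrN ler_norm.
have := ub_le_sup band_sup.2 (in_band k); have := ub_le_sup band_sup.2 (in_band k').
have := ge_inf band_inf.2 (in_band k); have := ge_inf band_inf.2 (in_band k').
rewrite /band_length ler_norml.
move: (sup _) (inf _) (eigval (A k) j) (eigval (A k') j) => s i x y *.
by apply/andP; split; lra.
Qed.

Lemma total_bandwidth_ge0 : 0 <= S.
Proof.
by apply: sumr_ge0 => j _; apply: le_trans (dist_eigval_fiber_op_le 0 0 j); rewrite normr_ge0.
Qed.

Lemma dist_Re_mxtrace_fiber_opX_le k k' n :
  `|T k n - T k' n| <= n.+1%:R * kappa_max ^+ n * S.
Proof.
rewrite !Re_mxtrace_exp_eigval ?fiber_op_hermitian // -sumrB mulr_sumr.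
apply: le_trans (ler_norm_sum _ _ _) (ler_sum _ _) => j _.
apply: le_trans (ler_norm_subXn _ (norm_eigval_fiber_op_le k j)
  (norm_eigval_fiber_op_le k' j)) _.
by rewrite ler_wpM2l ?dist_eigval_fiber_op_le // mulr_ge0 ?exprn_ge0.
Qed.

Lemma B_odd_le n : 2 * B_odd src tgt tau alpha n.+1 <= n.+1%:R * kappa_max ^+ n * S.
Proof.
suff -> : 2 * B_odd src tgt tau alpha n.+1 = `|T 0 n - T (const_mx pi) n|.
  exact: dist_Re_mxtrace_fiber_opX_le.
rewrite !Re_mxtrace_fiber_opX -sumrB /B_odd -[2]normr_nat -normrM mulr_sumr big_mkcondr.
congr `|_|; apply: eq_bigr => c _.
rewrite pairingr0 addr0 pairing_const_mx cosDpi_int /cycle_odd -signr_odd.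
by case: odd; rewrite ?expr1 ?expr0; lra.
Qed.

Lemma sum_torus_grid_Re_mxtrace_fiber_opX N n :
    (forall (c : {ffun 'I_n.+1 -> E}) j, (`|cycle_index tau c 0%R j| < N)%N) ->
  \sum_(t : {ffun 'I_d -> 'I_N}) (T 0 n - T (torus_grid R t) n) =
  (N ^ d)%:R * \sum_(c : {ffun 'I_n.+1 -> E} | is_cycle src tgt c && (cycle_index tau c != 0))
                 cos (cycle_flux alpha c).
Proof.
move=> index_lt_N; under eq_bigr => t _ do rewrite !Re_mxtrace_fiber_opX.
rewrite sumrB sumr_const card_ffun !card_ord exchange_big /=.
under [X in _ - X = _]eq_bigr => c _ do rewrite (sum_cos_torus_grid _ (index_lt_N c)).
rewrite -sumrMnl -sumrB mulr_sumr big_mkcondr; apply: eq_bigr => c _.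
rewrite pairingr0 addr0 -[cos _ *+ _]mulr_natl.
by case: (cycle_index tau c == 0); rewrite /= ?mul1r ?mul0r ?subrr ?subr0.
Qed.

Lemma B_plus_le n : B_plus src tgt tau alpha n.+1 <= n.+1%:R * kappa_max ^+ n * S.
Proof.
pose N := (\sum_(c : {ffun 'I_n.+1 -> E}) \sum_j `|cycle_index tau c 0%R j|).+1.
have index_lt_N (c : {ffun 'I_n.+1 -> E}) j : (`|cycle_index tau c 0%R j| < N)%N.
  by rewrite /N ltnS (bigD1 c) //= (bigD1 j) //= -addnA leq_addr.
have Nd_gt0 : (0 : R) < (N ^ d)%:R by rewrite ltr0n expn_gt0.
rewrite /B_plus -(ler_pM2l Nd_gt0) -[X in X * `|_|]normr_nat -normrM.
rewrite -(sum_torus_grid_Re_mxtrace_fiber_opX index_lt_N).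
apply: le_trans (ler_norm_sum _ _ _) _.
apply: le_trans (ler_sum _ (fun t _ => dist_Re_mxtrace_fiber_opX_le 0 (torus_grid R t) n)) _.
by rewrite sumr_const card_ffun !card_ord [X in _ <= X]mulr_natl.
Qed.

End FiberOperator.

Theorem corollary4p1 (R : realType) (d nu : nat) (E : finType)
    (src tgt : E -> 'I_nu) (inv : E -> E) (tau : E -> 'rV[int]_d)
    (alpha : E -> R) (n : nat) :
  (0 < d)%N -> (0 < nu)%N ->
  periodic_graph_axioms src tgt inv tau ->
  lift_connected src tgt tau ->
  magnetic_axiom inv alpha ->
  (0 < n)%N ->
  Num.max (B_plus src tgt tau alpha n) (2 * B_odd src tgt tau alpha n)
    / (n%:R * (kappa_plus src)%:R ^+ n.-1)
  <= total_bandwidth src tgt tau alpha.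
Proof.
move=> _ _ graphA _ magneticA; case: n => [//|n] _ /=.
have [->|denom_neq0] := eqVneq (n.+1%:R * (kappa_plus src)%:R ^+ n : R) 0.
  by rewrite invr0 mulr0 (total_bandwidth_ge0 alpha graphA).
have denom_gt0 : 0 < n.+1%:R * (kappa_plus src)%:R ^+ n :> R.
  by rewrite lt_def denom_neq0 mulr_ge0 ?exprn_ge0.
by rewrite ler_pdivrMr // ge_max mulrC (B_plus_le graphA magneticA) (B_odd_le graphA magneticA).
Qed.
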